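(* Fix a positive integer $z$. There is a randomized algorithm that uses only the ordinal profile and makes no distance queries. On every finite metric space $(X,d)$ with $|X|=n$ and every consistent profile, it outputs a set $C\subseteq X$ with $|C|=O(\log n)$ such that, with probability at least $2/3$, $\phi_C(X)\le O(1)\cdot\mathrm{OPT}_{2,z}(X,d)$. The constant in $O(1)$ is independent of $n$ and of the instance.
   Context: Ordinal query model: $(X,d)$ is a finite metric space with $|X|=n$. Every point $x\in X$ reports a ranking $\pi_x$ of all points of $X$ such that $y$ is ranked above $y'$ only if $d(x,y)\le d(x,y')$ (ties broken arbitrarily); the collection is a profile consistent with $d$. An algorithm receives $X$, $k$ and the profile for free. Its only other access to $d$ is by querying exact distances, at a cost of one query each. For $C\subseteq X$, $d(x,C)=\min_{c\in C}d(x,c)$. The $(k,z)$-clustering cost of $C$ is $\phi_C(X)=\left(\sum_{x\in X}d(x,C)^z\right)^{1/z}$, and $\mathrm{OPT}_{k,z}(X,d)=\min_{C\subseteq X,|C|=k}\phi_C(X)$. The output may contain more than $k$ centers (a bicriteria solution), but its cost is compared with the optimum over sets of exactly $k$ centers, here $k=2$. *)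

From HB Require Import structures.
From mathcomp Require Import all_boot all_order all_algebra all_fingroup.
From mathcomp Require Import reals exp.
Set Implicit Arguments. Unset Strict Implicit. Unset Printing Implicit Defensive.
Import Order.TTheory GRing.Theory Num.Theory.
Local Open Scope ring_scope.

Definition is_metric (R : realType) (n : nat) (d : 'I_n -> 'I_n -> R) : Prop :=
  (forall x y, 0 <= d x y) /\
  (forall x y, d x y = 0 <-> x = y) /\
  (forall x y, d x y = d y x) /\
  (forall x y w, d x w <= d x y + d y w).

(* An ordinal profile: for each point x, a ranking of all points, given as
   the bijection  rank |-> point  (rank 0 = top of x's list). *)
Definition profile (n : nat) := 'I_n -> {perm 'I_n}.

Definition consistent (R : realType) (n : nat) (d : 'I_n -> 'I_n -> R)
  (pi : profile n) : Prop :=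
  forall (x : 'I_n) (i j : 'I_n), (i < j)%N -> d x (pi x i) <= d x (pi x j).

(* d(x,C) = min_{c in C} d(x,c) (for C nonempty; 0 by convention if C = set0). *)
Definition dist_set (R : realType) (n : nat) (d : 'I_n -> 'I_n -> R)
  (x : 'I_n) (C : {set 'I_n}) : R :=
  if [pick c in C] is Some c0 then \big[Order.min/d x c0]_(c in C) d x c else 0.

Definition cost (R : realType) (n : nat) (d : 'I_n -> 'I_n -> R) (z : nat)
  (C : {set 'I_n}) : R :=
  powR (\sum_(x : 'I_n) (dist_set d x C) ^+ z) (z%:R^-1).

Definition OPT (R : realType) (n : nat) (d : 'I_n -> 'I_n -> R) (k z : nat) : R :=
  let dflt := if [pick C : {set 'I_n} | #|C| == k] is Some C0 then cost d z C0 else 0 in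
  \big[Order.min/dflt]_(C : {set 'I_n} | #|C| == k) cost d z C.

Definition is_distr (R : realType) (T : finType) (p : {ffun T -> R}) : Prop :=
  (forall t, 0 <= p t) /\ \sum_t p t = 1.

(* A randomized algorithm that sees only n (i.e. X) and the profile (no distance
   queries): its output is a probability distribution over subsets of X. *)
Definition ordinal_algorithm (R : realType) :=
  forall n : nat, profile n -> {ffun {set 'I_n} -> R}.

From HB Require Import structures.
From mathcomp Require Import all_boot all_order all_algebra all_fingroup.
From mathcomp Require Import reals exp.
From mathcomp Require Import zify ring lra.
Import Order.TTheory GRing.Theory Num.Theory.
Local Open Scope ring_scope.

Set Implicit Arguments.
Unset Strict Implicit.
Unset Printing Implicit Defensive.

(* The algorithm draws a uniform pair (y, r) of points and returns y together
   with, for every scale 2 ^ i <= n, the (r mod 2 ^ i)-th point from the bottom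
   of y's ranking, i.e. a uniform point among the 2 ^ i points farthest from y.
   Fix optimal centers e, f with y nearer to e. By Markov, with probability
   5/6 the point y is typical: n d(y, e) ^ z = O(OPT ^ z), so y serves e's
   cluster. If y also serves f's cluster F we are done. Otherwise let W be the
   points much nearer to f than the typical member of F, N the outliers of F
   (|N| << |F| by Markov again), and 2 ^ i <= |W| < 2 ^ (i + 1). A point
   outside W and N is nearer to e than to f, and then (since d(y, f) is large)
   nearer to y than every point of W; so the 2 ^ i points farthest from y lie in
   W or N, and the sample at scale i is in W, hence serves F, except with
   probability 1/6. *)

Section PowerInequalities.
Variables (R : realFieldType) (z : nat).

Lemma exprD_le2 (u v : R) : 0 <= u -> 0 <= v ->
  (u + v) ^+ z <= 2 ^+ z * (u ^+ z + v ^+ z).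
Proof.
wlog huv : u v / u <= v => [hwlog hu hv|hu hv].
  by case: (leP u v) => [|/ltW] huv; [|rewrite addrC [u ^+ z + _]addrC]; apply: hwlog.
apply: (@le_trans _ _ ((2 * v) ^+ z)).
  by apply: lerXn2r; rewrite ?nnegrE; lra.
by rewrite exprMn ler_wpM2l ?exprn_ge0 // lerDr exprn_ge0.
Qed.

Lemma exprD_le3 (u v w : R) : 0 <= u -> 0 <= v -> 0 <= w ->
  (u + v + w) ^+ z <= 4 ^+ z * (u ^+ z + v ^+ z + w ^+ z).
Proof.
move=> hu hv hw; apply: le_trans (exprD_le2 (addr_ge0 hu hv) hw) _.
have -> : (4 : R) ^+ z = 2 ^+ z * 2 ^+ z by rewrite -exprMn; congr (_ ^+ _); ring.
rewrite -mulrA ler_wpM2l ?exprn_ge0 // mulrDr lerD ?exprD_le2 //.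
by rewrite ler_peMl ?exprn_ge0 // exprn_ege1 //; lra.
Qed.

End PowerInequalities.

Lemma markov_count (R : realFieldType) (T : finType) (F : T -> R) (k t : nat) :
  (forall x, 0 <= F x) ->
  (k * #|[set x | (k%:R * \sum_y F y < t%:R * F x)%R]| <= t)%N.
Proof.
move=> F0; set S := \sum_y F y.
have S0 : 0 <= S by apply: sumr_ge0.
have [S_eq0|Sn0] := eqVneq S 0.
  suff -> : [set x | (k%:R * S < t%:R * F x)%R] = set0 by rewrite cards0 muln0.
  apply/setP => x; rewrite !inE S_eq0 mulr0 (psumr_eq0P _ S_eq0) ?mulr0 ?ltxx //.
have Sp : 0 < S by rewrite lt_def Sn0 S0.
set B := [set x | _].
rewrite -(ler_nat R) natrM -(ler_pM2r Sp).
have -> : k%:R * #|B|%:R * S = \sum_(x in B) k%:R * S.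
  by rewrite sumr_const -[RHS]mulr_natr mulrAC.
apply: le_trans (_ : \sum_(x in B) t%:R * F x <= _).
  by apply: ler_sum => x; rewrite inE => /ltW.
rewrite -mulr_sumr ler_wpM2l // [leRHS](bigID [in B]) /= lerDl.
exact: sumr_ge0.
Qed.

Lemma card_ord_lt n t : (#|[set k : 'I_n | (k < t)%N]| <= t)%N.
Proof.
rewrite cardE -(size_map val) -[t in (_ <= t)%N](size_iota 0).
apply: uniq_leq_size; first by rewrite (map_inj_uniq val_inj) enum_uniq.
by move=> x /mapP [k]; rewrite mem_enum inE => kt ->; rewrite mem_iota.
Qed.

Section Costs.
Variables (R : realType) (n : nat) (d : 'I_n -> 'I_n -> R).

Lemma dist_set_le x (C : {set 'I_n}) c : c \in C -> dist_set d x C <= d x c.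
Proof.
move=> cC; rewrite /dist_set; case: pickP => [c0 _|/(_ c)]; last by rewrite cC.
exact: bigmin_le_cond.
Qed.

Lemma dist_set_ge0 x (C : {set 'I_n}) :
  (forall u v, 0 <= d u v) -> 0 <= dist_set d x C.
Proof.
by move=> d0; rewrite /dist_set; case: pickP => // c0 _; apply: le_bigmin.
Qed.

Lemma dist_set2 x a b : dist_set d x [set a; b] = Order.min (d x a) (d x b).
Proof.
have inab c : c \in [set a; b] -> Order.min (d x a) (d x b) <= d x c.
  by rewrite !inE => /orP [] /eqP ->; rewrite ge_min lexx ?orbT.
apply/le_anti; rewrite le_min !dist_set_le ?inE ?eqxx ?orbT //=.
rewrite /dist_set; case: pickP => [c0 /inab c0ab|/(_ a)]; last by rewrite !inE eqxx.
exact: le_bigmin.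
Qed.

Definition zcost (z : nat) (C : {set 'I_n}) : R := \sum_x dist_set d x C ^+ z.

Lemma cost_le_scale z (C C0 : {set 'I_n}) (K : R) :
  (0 < z)%N -> 1 <= K -> (forall u v, 0 <= d u v) ->
  zcost z C <= K * zcost z C0 -> cost d z C <= K * cost d z C0.
Proof.
move=> z_gt0 K1 d0 hC; have K0 : 0 <= K by lra.
have zcost_ge0 D : 0 <= zcost z D.
  by apply: sumr_ge0 => x _; rewrite exprn_ge0 ?dist_set_ge0.
have z_neq0 : (z%:R : R) != 0 by rewrite pnatr_eq0 -lt0n.
rewrite /cost -!/(zcost _ _).
apply: (@le_trans _ _ (powR (K ^+ z * zcost z C0) z%:R^-1)).
  apply: ge0_ler_powR; rewrite ?nnegrE ?invr_ge0 ?mulr_ge0 ?exprn_ge0 //.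
  by apply: le_trans hC _; rewrite ler_wpM2r // ler_eXnr.
by rewrite powRM ?exprn_ge0 // -powR_mulrn // -powRrM mulfV // powRr1.
Qed.

Lemma OPT_attained k z : (k <= n)%N ->
  exists C : {set 'I_n}, #|C| = k /\ OPT d k z = cost d z C.
Proof.
move=> kn; rewrite /OPT.
apply: (big_ind (fun v => exists C : {set 'I_n}, #|C| = k /\ v = cost d z C)).
- case: pickP => [C0 /eqP C0k|none]; first by exists C0.
  have := card_draws 'I_n k; rewrite card_ord.
  move/(congr1 (fun m => 0 < m)%N); rewrite bin_gt0 kn card_gt0 => /set0Pn [C].
  by rewrite inE none.
- by move=> u v hu hv; rewrite /Order.min; case: ifP.
- by move=> C /eqP Ck; exists C.
Qed.

End Costs.

Definition far_const (R : realType) (z : nat) : R := 4 ^+ z * 144.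
Definition approx_const (R : realType) (z : nat) : R := 2 ^+ z * (7 + far_const R z).

Section Metric.
Variables (R : realType) (n : nat) (d : 'I_n -> 'I_n -> R).
Hypothesis hd : is_metric d.

Lemma metric_ge0 x y : 0 <= d x y. Proof. by case: hd. Qed.
Lemma metric_xx x : d x x = 0. Proof. by case: hd => _ [/(_ x x) [_ ->]]. Qed.
Lemma metric_sym x y : d x y = d y x. Proof. by case: hd => _ [_ []]. Qed.
Lemma metric_tri x y w : d x w <= d x y + d y w. Proof. by case: hd => _ [_ [_]]. Qed.

Lemma zcost_le_reassign z (F C : {set 'I_n}) e f y g : y \in C -> g \in C ->
  zcost d z C <= 2 ^+ z * (\sum_x (if x \in F then d x f else d x e) ^+ z
                           + #|F|%:R * d f g ^+ z + n%:R * d e y ^+ z).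
Proof.
move=> yC gC; pose a x := if x \in F then d x f else d x e.
pose b x := if x \in F then d f g else d e y.
have step x : dist_set d x C ^+ z <= 2 ^+ z * (a x ^+ z + b x ^+ z).
  have a0 : 0 <= a x by rewrite /a; case: ifP; rewrite metric_ge0.
  have b0 : 0 <= b x by rewrite /b; case: ifP; rewrite metric_ge0.
  apply: le_trans (exprD_le2 z a0 b0); apply: lerXn2r; rewrite ?nnegrE ?addr_ge0 //.
    exact: dist_set_ge0 metric_ge0.
  rewrite /a /b; case: ifP => _.
    exact: le_trans (dist_set_le _ _ gC) (metric_tri _ _ _).
  exact: le_trans (dist_set_le _ _ yC) (metric_tri _ _ _).
apply: le_trans (ler_sum _ (fun x _ => step x)) _.
rewrite -mulr_sumr ler_wpM2l ?exprn_ge0 // big_split -addrA lerD2l /=.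
apply: (@le_trans _ _ (\sum_x ((if x \in F then d f g ^+ z else 0) + d e y ^+ z))).
  by apply: ler_sum => x _; rewrite /b; case: ifP; rewrite ?add0r ?lerDl ?exprn_ge0 ?metric_ge0.
by rewrite big_split /= -big_mkcond !sumr_const card_ord !mulr_natl.
Qed.

Lemma nearer_than_far_cluster z (m S : R) y e f g w : 0 <= m ->
  m * d y e ^+ z <= 6 * S -> m * d e g ^+ z <= 48 * S -> m * d w f ^+ z <= 48 * S ->
  far_const R z * S < m * d y f ^+ z -> d y g < d y w.
Proof.
move=> m0 hye heg hwf hyf; rewrite ltNge; apply/negP => hwg.
have S0 : 0 <= S by have := mulr_ge0 m0 (exprn_ge0 z (metric_ge0 y e)); lra.
have hsum : d y f <= d y e + d e g + d w f.
  apply: le_trans (metric_tri y w f) _; rewrite lerD2r.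
  exact: le_trans hwg (metric_tri y e g).
suff : m * d y f ^+ z <= far_const R z * S by lra.
apply: (@le_trans _ _ (m * (4 ^+ z * (d y e ^+ z + d e g ^+ z + d w f ^+ z)))).
  rewrite ler_wpM2l //; apply: le_trans (exprD_le3 _ _ _ _); rewrite ?metric_ge0 //.
  by apply: lerXn2r; rewrite ?nnegrE ?addr_ge0 ?metric_ge0.
rewrite /far_const mulrCA -mulrA ler_wpM2l ?exprn_ge0 // !mulrDr; lra.
Qed.

End Metric.

Definition far_pt n (pi : profile n) (y j : 'I_n) : 'I_n := pi y (rev_ord j).

Definition mod_ord n (r : 'I_n) (q : nat) : 'I_n :=
  Ordinal (leq_ltn_trans (leq_mod r q) (ltn_ord r)).

Definition sample_centers n (pi : profile n) (p : 'I_n * 'I_n) : {set 'I_n} :=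
  p.1 |: [set far_pt pi p.1 (mod_ord p.2 (2 ^ i)) | i : 'I_(trunc_log 2 n).+1].

Definition uniform_image (R : realType) (T U : finType) (f : T -> U) : {ffun U -> R} :=
  [ffun u => \sum_(t | f t == u) #|T|%:R^-1].

Definition ordinal_sampler (R : realType) : ordinal_algorithm R :=
  fun n pi => uniform_image R (@sample_centers n pi).

Section UniformImage.
Variables (R : realType) (T U : finType) (f : T -> U).

Lemma uniform_image_sum (G : pred U) :
  \sum_(u | G u) uniform_image R f u = #|[set t | G (f t)]|%:R / #|T|%:R.
Proof.
under eq_bigr do rewrite ffunE.
transitivity (\sum_(t | G (f t)) (#|T|%:R^-1 : R)).
  rewrite [RHS](partition_big f G) //=; apply: eq_bigr => u Gu.
  by apply: eq_bigl => t; case: eqP => [->|]; rewrite ?Gu ?andbF.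
by rewrite -big_set sumr_const -[LHS]mulr_natr mulrC.
Qed.

Lemma uniform_image_distr : (0 < #|T|)%N -> is_distr (uniform_image R f).
Proof.
move=> T0; split=> [u|]; first by rewrite ffunE sumr_ge0 // => t _; rewrite invr_ge0.
rewrite uniform_image_sum cardsT mulfV // pnatr_eq0 -lt0n //.
Qed.

Lemma uniform_image_supp u : 0 < uniform_image R f u -> exists t, f t = u.
Proof.
rewrite ffunE; case: (pickP (fun t => f t == u)) => [t /eqP <-|none]; first by exists t.
by rewrite big_pred0 // ltxx.
Qed.

End UniformImage.

Lemma card_sample_centers n (pi : profile n) p : (2 <= n)%N ->
  (#|sample_centers pi p| <= 3 * trunc_log 2 n)%N.
Proof.
move=> n2; rewrite cardsU1.
have L_gt0 : (0 < trunc_log 2 n)%N by rewrite trunc_log_gt0.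
have := leq_imset_card (fun i : 'I_(trunc_log 2 n).+1 => far_pt pi p.1 (mod_ord p.2 (2 ^ i)))
  'I_(trunc_log 2 n).+1.
rewrite card_ord; set A := #|_|.
by case: (_ \notin _) => /=; lia.
Qed.

Lemma card_mod_preim n q (J : {set 'I_n}) : (0 < q)%N ->
  (#|[set r | mod_ord r q \in J]| <= (n %/ q).+1 * #|J|)%N.
Proof.
move=> q_gt0.
pose h (r : 'I_n) := (inord (r %/ q) : 'I_(n %/ q).+1, mod_ord r q).
have div_lt (r : 'I_n) : (r %/ q < (n %/ q).+1)%N by rewrite ltnS leq_div2r // ltnW.
have h_inj : injective h.
  move=> r1 r2 [/(congr1 val)]; rewrite /= !inordK // => div_eq mod_eq.
  by apply: val_inj; rewrite /= (divn_eq r1 q) (divn_eq r2 q) div_eq mod_eq.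
rewrite -(card_imset _ h_inj) -[X in (_ <= X * _)%N]card_ord -cardsT -cardsX.
apply: subset_leq_card; apply/subsetP => x /imsetP [r]; rewrite inE => rJ ->.
by rewrite in_setX in_setT.
Qed.

Section Profile.
Variables (R : realType) (n : nat) (d : 'I_n -> 'I_n -> R) (pi : profile n).
Hypothesis hpi : consistent d pi.

Lemma consistent_rank_lt y u v : d y (pi y u) < d y (pi y v) -> (u < v)%N.
Proof.
move=> duv; rewrite ltnNge leq_eqVlt; apply/negP => /orP [/eqP/val_inj vu|vu].
  by move: duv; rewrite vu ltxx.
by move: duv; rewrite ltNge hpi.
Qed.

Lemma card_farther y j (W : {set 'I_n}) :
  (forall w, w \in W -> d y (far_pt pi y j) < d y w) -> (#|W| <= j)%N.
Proof.
move=> farther; pose rk w := rev_ord ((pi y)^-1 w)%g.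
have rk_inj : injective rk by move=> u v /rev_ord_inj /perm_inj.
rewrite -(card_imset _ rk_inj); apply: leq_trans (card_ord_lt n j).
apply: subset_leq_card; apply/subsetP => x /imsetP [w wW ->]; rewrite inE.
have far_lt : d y (pi y (rev_ord j)) < d y (pi y ((pi y)^-1 w)%g).
  by rewrite permKV; exact: farther.
have := consistent_rank_lt far_lt.
by move: (ltn_ord j) (ltn_ord ((pi y)^-1 w)%g) => /=; lia.
Qed.

End Profile.

Section TwoClusters.
Variables (R : realType) (n z : nat) (d : 'I_n -> 'I_n -> R) (pi : profile n).
Hypotheses (z_gt0 : (0 < z)%N) (hd : is_metric d) (hpi : consistent d pi).
Variables (e f y : 'I_n).
Hypothesis ye_le_yf : d y e <= d y f.

Let delta x := Order.min (d x e) (d x f).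
Let S := \sum_x delta x ^+ z.
Let F := [set x | d x f < d x e].

Hypothesis y_typical : n%:R * delta y ^+ z <= 6 * S.

Let delta_F x : delta x = if x \in F then d x f else d x e.
Proof. by rewrite /delta inE minEle; case: leP. Qed.

Let delta_ge0 x : 0 <= delta x.
Proof. by rewrite delta_F; case: ifP; rewrite metric_ge0. Qed.

Let S_ge0 : 0 <= S.
Proof. by apply: sumr_ge0 => x _; rewrite exprn_ge0. Qed.

Let delta_y : delta y = d y e.
Proof. by rewrite /delta minEle ye_le_yf. Qed.

Lemma zcost_le_approx (C : {set 'I_n}) g : y \in C -> g \in C ->
  #|F|%:R * d f g ^+ z <= far_const R z * S -> zcost d z C <= approx_const R z * S.
Proof.
move=> yC gC Fg.
have sum_delta : \sum_x (if x \in F then d x f else d x e) ^+ z = S.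
  by under eq_bigr do rewrite -delta_F.
have ey : n%:R * d e y ^+ z <= 6 * S by rewrite metric_sym // -delta_y.
apply: le_trans (zcost_le_reassign hd z F e f yC gC) _.
rewrite sum_delta /approx_const -mulrA ler_wpM2l ?exprn_ge0 //.
have -> : (7 + far_const R z) * S = S + far_const R z * S + 6 * S by ring.
by rewrite !lerD.
Qed.

Lemma bad_samples_near_eq0 : #|F|%:R * d y f ^+ z <= far_const R z * S ->
  [set r | approx_const R z * S < zcost d z (sample_centers pi (y, r))] = set0.
Proof.
move=> Fy; apply/setP => r; rewrite !inE; apply/negbTE; rewrite -leNgt.
by apply: (zcost_le_approx (g := y)); rewrite ?setU11 // metric_sym.
Qed.

Section FarCluster.
Hypothesis y_far : far_const R z * S < #|F|%:R * d y f ^+ z.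

Let W := [set x | #|F|%:R * d x f ^+ z <= 48 * S].
Let N := [set x | 48 * S < #|F|%:R * delta x ^+ z].
Let q := (2 ^ trunc_log 2 #|W|)%N.

Let f_in_W : f \in W.
Proof. by rewrite inE metric_xx // expr0n eqn0Ngt z_gt0 mulr0 mulr_ge0. Qed.

Let q_le_W : (q <= #|W|)%N.
Proof. by apply: trunc_logP; rewrite // card_gt0; apply/set0Pn; exists f. Qed.

Let card_N_lt : (12 * #|N| < q)%N.
Proof.
have N_le : (48 * #|N| <= #|F|)%N by apply: markov_count => x; rewrite exprn_ge0.
have F_le : (#|F| <= #|W| + #|N|)%N.
  apply: leq_trans (leq_card_setU W N); apply: subset_leq_card.
  apply/subsetP => x xF; rewrite in_setU !inE orbC.
  by case: ltP => //=; rewrite delta_F xF.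
have W_lt : (#|W| < 2 * q)%N by rewrite -expnS trunc_log_ltn.
lia.
Qed.

Let sample_near_f r (g := far_pt pi y (mod_ord r q)) :
  #|F|%:R * delta g ^+ z <= 48 * S -> #|F|%:R * d g f ^+ z <= 48 * S.
Proof.
move=> g_inlier; rewrite leNgt; apply/negP => g_far.
have gF : g \notin F.
  by apply/negP => gF; move: g_inlier; rewrite delta_F gF leNgt g_far.
have Fn : (#|F|%:R : R) <= n%:R by rewrite ler_nat -[n in (_ <= n)%N]card_ord max_card.
have Fye : #|F|%:R * d y e ^+ z <= 6 * S.
  apply: le_trans y_typical; rewrite delta_y ler_wpM2r ?exprn_ge0 ?metric_ge0 //.
have Feg : #|F|%:R * d e g ^+ z <= 48 * S.
  by move: g_inlier; rewrite delta_F (negbTE gF) metric_sym.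
have nearer w : w \in W -> d y g < d y w.
  rewrite inE => Fwf.
  exact: (nearer_than_far_cluster hd (ler0n _ _) Fye Feg Fwf y_far).
have := card_farther hpi nearer; rewrite leqNgt /= (leq_trans _ q_le_W) //.
by rewrite ltn_pmod ?expn_gt0.
Qed.

Lemma card_bad_far :
  (6 * #|[set r | (approx_const R z * S < zcost d z (sample_centers pi (y, r)))%R]| <= n)%N.
Proof.
have q_gt0 : (0 < q)%N by rewrite expn_gt0.
have bad_sub : [set r | approx_const R z * S < zcost d z (sample_centers pi (y, r))]
    \subset [set r | mod_ord r q \in far_pt pi y @^-1: N].
  apply/subsetP => r; rewrite !inE; apply: contraTT; rewrite -!leNgt => g_inlier.
  apply: (zcost_le_approx (g := far_pt pi y (mod_ord r q))); rewrite ?setU11 //.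
    apply/setU1P; right; apply/imsetP.
    have i_lt : (trunc_log 2 #|W| < (trunc_log 2 n).+1)%N.
      by rewrite ltnS leq_trunc_log // -[n in (_ <= n)%N]card_ord max_card.
    by exists (Ordinal i_lt).
  have le48 : (48 : R) <= far_const R z.
    apply: (@le_trans _ _ 144); first by rewrite ler_nat.
    by rewrite /far_const ler_peMl ?ler0n // exprn_ege1 // ler1n.
  rewrite metric_sym //; apply: le_trans (sample_near_f g_inlier) _.
  by rewrite ler_wpM2r.
have far_inj : injective (far_pt pi y) by move=> u v /perm_inj /rev_ord_inj.
have := leq_trans (subset_leq_card bad_sub) (card_mod_preim _ q_gt0).
rewrite card_preimset // => bad_le.
have W_le : (#|W| <= n)%N by rewrite -[n in (_ <= n)%N]card_ord max_card.
have div_N : (n %/ q * (12 * #|N|) <= n)%N.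
  by apply: leq_trans (leq_divM n q); rewrite leq_mul2l ltnW ?card_N_lt ?orbT.
apply: leq_trans (leq_mul (leqnn 6) bad_le) _.
move: (card_N_lt) q_le_W W_le div_N; move: (n %/ q)%N #|N| #|W| => X cN cW; lia.
Qed.

End FarCluster.

Lemma card_bad_samples :
  (6 * #|[set r | (approx_const R z * S < zcost d z (sample_centers pi (y, r)))%R]| <= n)%N.
Proof.
case: (leP (#|F|%:R * d y f ^+ z) (far_const R z * S)) => [near|far].
  by rewrite bad_samples_near_eq0 // cards0.
exact: card_bad_far.
Qed.

End TwoClusters.

Lemma card_pairs_le n (B : {set 'I_n * 'I_n}) (Y : {set 'I_n}) :
  (6 * #|Y| <= n)%N -> (forall y, y \notin Y -> 6 * #|[set r | (y, r) \in B]| <= n)%N ->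
  (3 * #|B| <= n * n)%N.
Proof.
move=> Y_le rows_le.
have card_rows : #|B| = (\sum_y #|[set r | (y, r) \in B]|)%N.
  transitivity (\sum_y \sum_r (if (y, r) \in B then 1 else 0))%N.
    by rewrite pair_bigA -sum1_card big_mkcond; apply: eq_bigr => -[].
  apply: eq_bigr => y _; rewrite -sum1_card [RHS]big_mkcond.
  by apply: eq_bigr => r _; rewrite inE.
have row_le y : (6 * #|[set r | (y, r) \in B]| <= (if y \in Y then 6 * n else 0) + n)%N.
  case: ifP => [_|/negbT /rows_le]; last by rewrite add0n.
  apply: leq_trans (leq_addr n (6 * n)).
  by rewrite leq_mul2l -[n in (_ <= n)%N]card_ord max_card orbT.
have : (6 * #|B| <= #|Y| * (6 * n) + n * n)%N.
  rewrite card_rows big_distrr /=.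
  apply: (@leq_trans (\sum_y ((if y \in Y then 6 * n else 0) + n))%N).
    by apply: leq_sum => y _; exact: row_le.
  by rewrite big_split /= -big_mkcond /= !sum_nat_const card_ord.
have : (n * (6 * #|Y|) <= n * n)%N by rewrite leq_mul2l Y_le orbT.
lia.
Qed.

Lemma approx_const_ge1 (R : realType) z : 1 <= approx_const R z.
Proof.
have two_z : 1 <= (2 : R) ^+ z by rewrite exprn_ege1 // ler1n.
have far_ge0 : 0 <= far_const R z by rewrite mulr_ge0 ?exprn_ge0.
by apply: le_trans two_z _; rewrite ler_peMr ?exprn_ge0 //; lra.
Qed.

Lemma card_bad_pairs (R : realType) n z (d : 'I_n -> 'I_n -> R) (pi : profile n) (a b : 'I_n) :
  (0 < z)%N -> is_metric d -> consistent d pi ->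
  (3 * #|[set p | (approx_const R z * \sum_x Order.min (d x a) (d x b) ^+ z
                   < zcost d z (sample_centers pi p))%R]| <= n * n)%N.
Proof.
move=> z_gt0 hd hpi; set S := \sum_x _.
apply: (card_pairs_le (Y := [set y | (6 * S < n%:R * Order.min (d y a) (d y b) ^+ z)%R])).
  by apply: markov_count => x; rewrite exprn_ge0 // le_min !metric_ge0.
move=> y; rewrite inE -leNgt => y_typical.
rewrite (_ : [set r | _] =
    [set r | approx_const R z * S < zcost d z (sample_centers pi (y, r))]); last first.
  by apply/setP => r; rewrite !inE.
case: (leP (d y a) (d y b)) => [|/ltW] y_near; first exact: card_bad_samples.
have S_ba : S = \sum_x Order.min (d x b) (d x a) ^+ z by apply: eq_bigr => x _; rewrite minC.
by rewrite minC S_ba in y_typical; rewrite S_ba; apply: card_bad_samples.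
Qed.

Theorem mainTheorem5 (R : realType) (z : nat) (hz : (0 < z)%N) :
  exists (c : nat) (alpha : R) (A : ordinal_algorithm R),
  forall (n : nat), (2 <= n)%N ->
  forall (d : 'I_n -> 'I_n -> R) (pi : profile n),
    is_metric d -> consistent d pi ->
    [/\ is_distr (A n pi),
        (forall C : {set 'I_n}, 0 < A n pi C -> (#|C| <= c * trunc_log 2 n)%N) &
        2 / 3 <= \sum_(C : {set 'I_n} | (C != set0) && (cost d z C <= alpha * OPT d 2 z))
                   A n pi C].
Proof.
exists 3%N, (approx_const R z), (@ordinal_sampler R) => n n2 d pi hd hpi.
have pairs_gt0 : (0 < #|{: 'I_n * 'I_n}|)%N by rewrite card_prod card_ord muln_gt0 ltnW.
split=> [|C /uniform_image_supp [p <-]|]; first exact: uniform_image_distr.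
  exact: card_sample_centers.
have [_ [/eqP/cards2P [a [b [_ ->]]] opt_ab]] := OPT_attained d z n2.
have zcost_ab : zcost d z [set a; b] = \sum_x Order.min (d x a) (d x b) ^+ z.
  by apply: eq_bigr => x _; rewrite dist_set2.
have B_le := card_bad_pairs a b hz hd hpi; set B := [set p | _] in B_le.
have good p : p \in ~: B ->
    (sample_centers pi p != set0) && (cost d z (sample_centers pi p) <= approx_const R z * OPT d 2 z).
  rewrite !inE -leNgt => p_good; apply/andP; split.
    by apply/set0Pn; exists p.1; rewrite setU11.
  rewrite opt_ab; apply: cost_le_scale; rewrite ?approx_const_ge1 ?zcost_ab //.
  exact: metric_ge0.
rewrite uniform_image_sum ler_pdivlMr ?ltr0n // mulrAC ler_pdivrMr ?ltr0n //.
rewrite -!natrM ler_nat; apply: (@leq_trans (#|~: B| * 3)).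
  by have := cardsC B; rewrite card_prod card_ord; lia.
by rewrite leq_mul2r /= subset_leq_card //; apply/subsetP => p /good; rewrite inE.
Qed.
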